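(* For each integer $k\geq2$, let $O_k=\langle x,e\mid x^k=x^{k-1}e=0,\ ex=x,\ e^2=e\rangle$. Then the pseudovariety $\llbracket O_k\rrbracket$ is not join irreducible.
   Context: All semigroups are finite; $O_k$ is the finite semigroup with zero $0$ given by the presentation. A pseudovariety is a class of finite semigroups closed under finite direct products, subsemigroups and homomorphic images; $\llbracket S\rrbracket$ is the pseudovariety generated by $S$. A pseudovariety $\mathbf{V}$ is join irreducible if for every set $\mathscr{X}$ of pseudovarieties, $\mathbf{V}\subseteq\bigvee\mathscr{X}$ implies $\mathbf{V}\subseteq\mathbf{X}$ for some $\mathbf{X}\in\mathscr{X}$. *)

From mathcomp Require Import all_boot.
From mathcomp Require Import zify.
Set Implicit Arguments. Unset Strict Implicit. Unset Printing Implicit Defensive.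

Record finSemigroup := FinSemigroup {
  sg_car :> finType;
  sg_op : sg_car -> sg_car -> sg_car;
  sg_assoc : associative sg_op;
  sg_nonempty : 0 < #|sg_car|
}.

Definition is_hom (S T : finSemigroup) (f : S -> T) : Prop :=
  forall x y : S, f (sg_op x y) = sg_op (f x) (f y).

Section Prod.
Variables S T : finSemigroup.
Definition prod_op (p q : (S * T)%type) : (S * T)%type :=
  (sg_op p.1 q.1, sg_op p.2 q.2).
Lemma prod_op_assoc : associative prod_op.
Proof. by move=> [a b] [c d] [e f]; rewrite /prod_op /= !sg_assoc. Qed.
Lemma prod_nonempty : 0 < #|{: (S * T)%type}|.
Proof. by rewrite card_prod muln_gt0 !sg_nonempty. Qed.
Definition prod_sg : finSemigroup :=
  @FinSemigroup (S * T)%type prod_op prod_op_assoc prod_nonempty.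
End Prod.

(** Closure under finite direct products =
    contains the trivial semigroup (empty product) and binary products;
    closure under subsemigroups is rendered as closure under injective
    homomorphisms (subsemigroups up to isomorphism), closure under
    homomorphic images as closure under surjective homomorphisms. *)
Definition pseudovariety (V : finSemigroup -> Prop) : Prop :=
  [/\ (forall S : finSemigroup, #|S| = 1 -> V S),
      (forall S T : finSemigroup, V S -> V T -> V (prod_sg S T)),
      (forall (S T : finSemigroup) (f : T -> S),
          is_hom f -> injective f -> V S -> V T)
    & (forall (S T : finSemigroup) (f : S -> T),
          is_hom f -> (forall y : T, exists x : S, f x = y) -> V S -> V T)].

Definition subclass (V W : finSemigroup -> Prop) : Prop :=
  forall S, V S -> W S.

Definition gen_pv (S : finSemigroup) : finSemigroup -> Prop :=
  fun U => forall W, pseudovariety W -> W S -> W U.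

Definition join_pv (X : (finSemigroup -> Prop) -> Prop) : finSemigroup -> Prop :=
  fun U => forall W, pseudovariety W -> (forall V, X V -> subclass V W) -> W U.

Definition join_irreducible (V : finSemigroup -> Prop) : Prop :=
  forall X : (finSemigroup -> Prop) -> Prop,
    (forall W, X W -> pseudovariety W) ->
    subclass V (join_pv X) -> exists W, X W /\ subclass V W.

(** * The semigroup O_k = < x, e | x^k = x^(k-1) e = 0, e x = x, e^2 = e >.
    Normal forms: 0 (None), and x^i e^b (Some (i, b)), i < k, b : bool,
    excluding the empty word (i = 0, b = false) and x^(k-1) e (which is 0).
    Since e x = x, the product (x^i e^a)(x^j e^b) equals x^(i+j) e^b
    (if j = 0 then b = true and e e = e), which is 0 when i + j >= k or
    (i + j = k - 1 and b). *)
Section Ok.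
Variable k : nat.

Definition Ok_valid (p : option ('I_k * bool)) : bool :=
  match p with
  | None => true
  | Some (i, b) => ((i != 0 :> nat) || b) && ~~ ((i == k.-1 :> nat) && b)
  end.

Definition Ok_mulO (p q : option ('I_k * bool)) : option ('I_k * bool) :=
  match p, q with
  | Some (i, _), Some (j, b) =>
      if (i + j == k.-1) && b then None
      else omap (fun l : 'I_k => (l, b)) (insub (i + j))
  | _, _ => None
  end.

Lemma Ok_mulO_valid p q : Ok_valid q -> Ok_valid (Ok_mulO p q).
Proof.
case: p => [[i a]|] //; case: q => [[j b]|] //= Hq.
case: ifP => // Hb; case: insubP => [l Hl Hv|] //=.
rewrite Hv Hb /= andbT; case: b Hq {Hb} => /=; rewrite ?orbT // orbF.
by move=> /andP[Hj _]; rewrite addn_eq0 negb_and Hj orbT.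
Qed.

Definition Ok_car := {p : option ('I_k * bool) | Ok_valid p}.

Definition Ok_mul (p q : Ok_car) : Ok_car :=
  exist _ (Ok_mulO (val p) (val q)) (Ok_mulO_valid (val p) (valP q)).

Definition Ok_enc (p : option ('I_k * bool)) : option (nat * bool) :=
  omap (fun q : 'I_k * bool => (val q.1, q.2)) p.

Lemma Ok_enc_inj : injective Ok_enc.
Proof.
move=> [[i a]|] [[j b]|] //= [] E ->.
by rewrite (val_inj E).
Qed.

Definition Ok_F (n : nat) (b : bool) : option (nat * bool) :=
  if (k <= n) || ((n == k.-1) && b) then None else Some (n, b).

Arguments Ok_F : simpl never.

Lemma Ok_enc_mul i a j b :
  Ok_enc (Ok_mulO (Some (i, a)) (Some (j, b))) = Ok_F (i + j) b.
Proof.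
rewrite /Ok_F /=; case: ifP => H; first by rewrite orbT.
rewrite orbF; case: insubP => [u Hu Hv|Hn] /=.
  by rewrite Hv leqNgt Hu.
by rewrite leqNgt Hn.
Qed.

Lemma Ok_mulO_assoc p q r : Ok_valid q -> Ok_valid r ->
  Ok_mulO p (Ok_mulO q r) = Ok_mulO (Ok_mulO p q) r.
Proof.
case: p => [[i a]|]; last by case: q => [[]|] //; case: r.
case: q => [[j b]|]; last by case: r.
case: r => [[l c]|]; last first.
  by move=> _ _; case: (Ok_mulO (Some (i, a)) (Some (j, b))) => [[]|].
rewrite /Ok_valid => /andP[Hj _] /andP[Hl _].
have EA := Ok_enc_mul i a j b; have EB := Ok_enc_mul j b l c.
case: (Ok_mulO (Some (i, a)) (Some (j, b))) EA => [[w b']|] EA;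
case: (Ok_mulO (Some (j, b)) (Some (l, c))) EB => [[u c']|] EB;
apply: Ok_enc_inj; rewrite ?Ok_enc_mul /=; rewrite /= in EA EB;
move: EA EB; rewrite /Ok_F;
repeat (case: ifP => //);
intros; repeat match goal with H : Some _ = Some _ |- _ =>
  injection H as ? ?; subst end; try discriminate;
try (f_equal; f_equal); lia.
Qed.
Lemma Ok_mul_assoc : associative Ok_mul.
Proof.
move=> p q r; apply: val_inj => /=.
exact: Ok_mulO_assoc (valP q) (valP r).
Qed.

Definition Ok_zero : Ok_car := exist _ None isT.

Lemma Ok_nonempty : 0 < #|{: Ok_car}|.
Proof. by apply/card_gt0P; exists Ok_zero. Qed.

Definition O_sg : finSemigroup :=
  @FinSemigroup Ok_car Ok_mul Ok_mul_assoc Ok_nonempty.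

End Ok.

From mathcomp Require Import all_boot.
From mathcomp Require Import zify.
Set Implicit Arguments. Unset Strict Implicit. Unset Printing Implicit Defensive.

(* O_k is a homomorphic image of the subsemigroup of N_k x R generated by
   (1, false) and (0, true), where N_k = {0, ..., k} under addition truncated
   at k is commutative and R = {false, true} under (a, b) |-> b is a band.
   Hence O_k lies in the join of the pseudovarieties of commutative semigroups
   and of bands; if [[O_k]] were join irreducible, O_k would be commutative or
   a band, but e x = x <> x e and x^2 <> x. *)

Definition commutative_sg (S : finSemigroup) : Prop := commutative (@sg_op S).

Definition band (S : finSemigroup) : Prop := idempotent_op (@sg_op S).

Lemma card1_all_equal (S : finSemigroup) : #|S| = 1 -> forall x y : S, x = y.
Proof. by move=> /eq_leq /fintype_le1P eqS x y; apply: eqS. Qed.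

Lemma pseudovariety_commutative : pseudovariety commutative_sg.
Proof.
split=> [S /card1_all_equal eqS x y | S T cS cT [a b] [c d] | S T f fM f_inj cS x y
        | S T f fM f_surj cS x y] //=.
- by rewrite /prod_op /= cS cT.
- by apply: f_inj; rewrite !fM cS.
- by have [[a <-] [b <-]] := (f_surj x, f_surj y); rewrite -!fM cS.
Qed.

Lemma pseudovariety_band : pseudovariety band.
Proof.
split=> [S /card1_all_equal eqS x | S T bS bT [a b] | S T f fM f_inj bS x
        | S T f fM f_surj bS x] //=.
- by rewrite /prod_op /= bS bT.
- by apply: f_inj; rewrite fM bS.
- by have [a <-] := f_surj x; rewrite -fM bS.
Qed.

Lemma pseudovariety_join_pv X : pseudovariety (join_pv X).
Proof.
split=> [S S1 W [W1 _ _ _] _ | S T XS XT W hW sXW | S T f fM f_inj XS W hW sXW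
        | S T f fM f_surj XS W hW sXW]; first exact: W1.
- by case: (hW) => _ WM _ _; apply: WM; [apply: XS | apply: XT].
- by case: (hW) => _ _ Winj _; apply: Winj fM f_inj (XS W hW sXW).
- by case: (hW) => _ _ _ Wsurj; apply: Wsurj fM f_surj (XS W hW sXW).
Qed.

Lemma join_irreducible_gen_pv S X :
  join_irreducible (gen_pv S) -> (forall W, X W -> pseudovariety W) ->
  join_pv X S -> exists2 W, X W & W S.
Proof.
move=> irrS pvX XS.
have sub_join : subclass (gen_pv S) (join_pv X).
  by move=> U SU; apply: SU (pseudovariety_join_pv X) XS.
have [W [XW subW]] := irrS X pvX sub_join.
by exists W => //; apply: subW => W' _.
Qed.

Section SubSemigroup.
Variables (S : finSemigroup) (P : pred S) (x0 : S).
Hypotheses (P_op : forall x y, P x -> P y -> P (sg_op x y)) (Px0 : P x0).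

Definition sub_op (x y : {x | P x}) : {x | P x} :=
  exist _ (sg_op (val x) (val y)) (P_op (valP x) (valP y)).

Lemma sub_op_assoc : associative sub_op.
Proof. by move=> x y z; apply: val_inj; rewrite /= sg_assoc. Qed.

Lemma sub_nonempty : 0 < #|{: {x | P x}}|.
Proof. by apply/card_gt0P; exists (exist _ x0 Px0). Qed.

Definition sub_sg : finSemigroup := FinSemigroup sub_op_assoc sub_nonempty.

Lemma val_sub_hom : is_hom (val : sub_sg -> S).
Proof. by []. Qed.

End SubSemigroup.

Section Saturated.
Variable k : nat.

Definition sat_add (i j : 'I_k.+1) : 'I_k.+1 := inord (minn (i + j) k).

Lemma sat_addE i j : sat_add i j = minn (i + j) k :> nat.
Proof. by rewrite inordK // ltnS geq_minr. Qed.

Lemma sat_add_assoc : associative sat_add.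
Proof. by move=> i j l; apply: val_inj; rewrite /= !sat_addE; lia. Qed.

Lemma sat_nonempty : 0 < #|{: 'I_k.+1}|.
Proof. by rewrite card_ord. Qed.

Definition sat_sg : finSemigroup := FinSemigroup sat_add_assoc sat_nonempty.

Lemma sat_sg_commutative : commutative_sg sat_sg.
Proof. by move=> i j; rewrite /= /sat_add addnC. Qed.

End Saturated.

Definition right_zero_op (a b : bool) : bool := b.

Lemma right_zero_op_assoc : associative right_zero_op.
Proof. by []. Qed.

Lemma bool_nonempty : 0 < #|{: bool}|.
Proof. by rewrite card_bool. Qed.

Definition right_zero_sg : finSemigroup :=
  FinSemigroup right_zero_op_assoc bool_nonempty.

Lemma right_zero_sg_band : band right_zero_sg.
Proof. by []. Qed.

Section OkCode.
Variable k : nat.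

Definition Ok_code (s : O_sg k) : option (nat * bool) := Ok_enc (val s).

Lemma Ok_code_inj : injective Ok_code.
Proof. by move=> s t /Ok_enc_inj /val_inj. Qed.

(* (x^i e^a) (x^j e^b) = x^(i+j) e^b, since e x = x and e e = e. *)
Definition code_mul (u v : option (nat * bool)) : option (nat * bool) :=
  if (u, v) is (Some (i, _), Some (j, b)) then Ok_F k (i + j) b else None.

Lemma Ok_codeM s t : Ok_code (sg_op s t) = code_mul (Ok_code s) (Ok_code t).
Proof. by case: s t => [[[i a]|] ?] [[[j b]|] ?] //; apply: Ok_enc_mul. Qed.

Definition Ok_nf (n : nat) (b : bool) : option ('I_k * bool) :=
  if (n == k.-1) && b then None else omap (fun i : 'I_k => (i, b)) (insub n).

Lemma Ok_nf_valid n b : (n != 0) || b -> Ok_valid (Ok_nf n b).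
Proof.
rewrite /Ok_nf => nb; case: ifP => // nb'; case: insubP => [i _ /= -> |] //.
by rewrite nb nb'.
Qed.

Definition Ok_word n b (nb : (n != 0) || b) : O_sg k :=
  exist _ (Ok_nf n b) (Ok_nf_valid nb).

Lemma Ok_code_word n b (nb : (n != 0) || b) : Ok_code (Ok_word nb) = Ok_F k n b.
Proof.
rewrite /Ok_code /= /Ok_nf /Ok_F; case: (_ && b); rewrite ?orbT ?orbF // leqNgt.
by case: insubP => [i -> /= -> | /negbTE ->].
Qed.

Lemma Ok_F_minn n b : Ok_F k (minn n k) b = Ok_F k n b.
Proof.
by rewrite /Ok_F; case: (leqP k n) => [kn | nk]; rewrite ?leqnn // leqNgt nk.
Qed.

Lemma code_mul_F i a j b : (i != 0) || a -> (j != 0) || b ->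
  code_mul (Ok_F k i a) (Ok_F k j b) = Ok_F k (i + j) b.
Proof.
rewrite /Ok_F => ia jb; case: ifP => [zero_ia | _]; case: ifP => [zero_jb | _] //=;
  rewrite /Ok_F; repeat case: ifP => //; lia.
Qed.

Lemma Ok_F_Some_inv n b p : Ok_F k n b = Some p -> p = (n, b).
Proof. by rewrite /Ok_F; case: ifP => // _ [<-]. Qed.

Lemma Ok_F_lt n b : n < k -> ~~ ((n == k.-1) && b) -> Ok_F k n b = Some (n, b).
Proof. by rewrite /Ok_F => nk /negbTE ->; rewrite orbF leqNgt nk. Qed.

End OkCode.

Section OkCover.
Variable k : nat.

(* (i, a) stands for x^i e^a, the empty word (0, false) being excluded;
   truncation at k matches x^k = 0. *)
Definition Ok_cover_pred : pred (prod_sg (sat_sg k) right_zero_sg) :=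
  fun p => (val p.1 != 0) || p.2.

Lemma Ok_cover_pred_op p q :
  Ok_cover_pred p -> Ok_cover_pred q -> Ok_cover_pred (sg_op p q).
Proof.
case: p q => [i a] [j b]; rewrite /Ok_cover_pred /= sat_addE.
by case: b; rewrite ?orbT ?orbF //; have := ltn_ord j; lia.
Qed.

Definition Ok_cover : finSemigroup :=
  sub_sg Ok_cover_pred_op (isT : Ok_cover_pred (ord0, true)).

Definition Ok_cover_map (p : Ok_cover) : O_sg k := Ok_word k (valP p).

Lemma Ok_code_cover_map p : Ok_code (Ok_cover_map p) = Ok_F k (val p).1 (val p).2.
Proof. exact: Ok_code_word. Qed.

Lemma Ok_cover_map_hom : is_hom Ok_cover_map.
Proof.
move=> p q; apply: Ok_code_inj.
rewrite Ok_codeM !Ok_code_cover_map code_mul_F; [| exact: (valP p) | exact: (valP q)].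
by rewrite /= sat_addE Ok_F_minn.
Qed.

Lemma Ok_cover_map_surj s : exists p : Ok_cover, Ok_cover_map p = s.
Proof.
case: s => [[[i b]|] v].
- have /andP[ib not_last] := v.
  exists (exist _ (widen_ord (leqnSn k) i, b) ib : Ok_cover); apply: Ok_code_inj.
  by rewrite Ok_code_cover_map /= Ok_F_lt.
- exists (exist _ (ord_max, true) (orbT _) : Ok_cover); apply: Ok_code_inj.
  by rewrite Ok_code_cover_map /Ok_F /= leqnn.
Qed.

End OkCover.

Definition commutative_or_band (W : finSemigroup -> Prop) : Prop :=
  W = commutative_sg \/ W = band.

Lemma Ok_in_join_commutative_band k : join_pv commutative_or_band (O_sg k).
Proof.
move=> W [_ WM Winj Wsurj] sub.
have WN : W (sat_sg k) := sub _ (or_introl erefl) _ (@sat_sg_commutative k).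
have WR : W right_zero_sg := sub _ (or_intror erefl) _ right_zero_sg_band.
apply: Wsurj (@Ok_cover_map_hom k) (@Ok_cover_map_surj k) _.
exact: Winj _ (Ok_cover k) val (@val_sub_hom _ _ _ _ _) val_inj (WM _ _ WN WR).
Qed.

Section OkGenerators.
Variables (k : nat) (k_gt1 : 1 < k).

Let x : O_sg k := Ok_word k (isT : (1 != 0) || false).
Let e : O_sg k := Ok_word k (isT : (0 != 0) || true).

Lemma Ok_code_x : Ok_code x = Some (1, false).
Proof. by rewrite Ok_code_word Ok_F_lt ?andbF. Qed.

Lemma Ok_code_e : Ok_code e = Some (0, true).
Proof. by rewrite Ok_code_word Ok_F_lt //; lia. Qed.

Lemma Ok_not_commutative : ~ commutative_sg (O_sg k).
Proof.
move=> /(_ x e) /(congr1 (@Ok_code k)); rewrite !Ok_codeM Ok_code_x Ok_code_e /=.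
by rewrite /code_mul [Ok_F k (0 + 1) false]Ok_F_lt ?andbF // => /Ok_F_Some_inv.
Qed.

Lemma Ok_not_band : ~ band (O_sg k).
Proof.
by move=> /(_ x) /(congr1 (@Ok_code k)); rewrite Ok_codeM Ok_code_x => /Ok_F_Some_inv.
Qed.

End OkGenerators.

Theorem proposition4p15 (k : nat) (hk : 2 <= k) :
  ~ join_irreducible (gen_pv (O_sg k)).
Proof.
move=> /join_irreducible_gen_pv irr.
have pv_cb W : commutative_or_band W -> pseudovariety W.
  by case=> ->; [exact: pseudovariety_commutative | exact: pseudovariety_band].
have [W [->|->]] := irr _ pv_cb (@Ok_in_join_commutative_band k).
- exact: Ok_not_commutative.
- exact: Ok_not_band.
Qed.
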